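(* Let $q\ge2$ and let $(p_1,\dots,p_q)$ and $(f_1,\dots,f_q)$ be vectors of positive reals, each summing to $1$, satisfying $f_1p_1\ge f_2p_2\ge\dots\ge f_qp_q$. Let $1\le z<q$ be an integer and $w=\lfloor z/2\rfloor+1$. Then: (1) if $z$ is even, $\frac{3z+2}{2}f_wp_w+(2z+1)\sum_{j=w+1}^q f_jp_j\le1$; (2) if $z$ is odd, $\frac{z+1}{2}f_wp_w+(2z+1)\sum_{j=w+1}^q f_jp_j\le 1$. *)

From HB Require Import structures.
From mathcomp Require Import all_boot all_order all_algebra.
Set Implicit Arguments. Unset Strict Implicit. Unset Printing Implicit Defensive.

(* Put a j = f j * p j, a nonincreasing sequence.  Expanding
   1 = (\sum f) * (\sum p) and bounding each cross pair f i p j + f j p i (i < j)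
   from below by 2 a j (AM-GM and a j <= a i) gives \sum_j (2 j - 1) a j <= 1.
   The prefix sums of the weights 2 j - 1 are the squares j ^ 2, so by Abel
   summation any weights with smaller prefix sums give a smaller weighted sum of
   the nonincreasing, nonnegative a.  Weight c at w and d beyond w qualifies as soon
   as c + d t <= (w + t) ^ 2 for all t, which holds for the coefficients of the
   statement: the slack is a product of two consecutive integers. *)

From HB Require Import structures.
From mathcomp Require Import all_boot all_order all_algebra.
Import Order.TTheory GRing.Theory Num.Theory.
From mathcomp Require Import zify lra.

Set Implicit Arguments.
Unset Strict Implicit.
Unset Printing Implicit Defensive.
Local Open Scope ring_scope.

Lemma sum_odd_nat (n : nat) : (\sum_(1 <= j < n.+1) j.*2.-1)%N = (n ^ 2)%N.
Proof.
elim: n => [|n IH]; first by rewrite big_geq.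
by rewrite big_nat_recr //= IH; lia.
Qed.

Definition tail_weight (w c d j : nat) : nat :=
  if j == w then c else if (w < j)%N then d else 0.

Lemma sum_tail_weight (w c d k : nat) : (0 < w)%N ->
  (\sum_(1 <= j < k.+1) tail_weight w c d j
     = if k < w then 0 else c + d * (k - w))%N.
Proof.
move=> w_gt0; elim: k => [|k IH]; first by rewrite big_geq // w_gt0.
rewrite big_nat_recr //= IH /tail_weight.
case: (ltngtP k.+1 w) => [//|lt_wk|<-].
- by rewrite ltnS in lt_wk; rewrite subSn // mulnS addnCA addnC.
- by rewrite subnn muln0 addn0.
Qed.

Lemma even_tail_bound (k t : nat) : (3 * k + 1 + (4 * k + 1) * t <= (k.+1 + t) ^ 2)%N.
Proof.
case: (leqP t k) => [/subnKC <-|/subnKC <-]; set x := (_ - _)%N; nia.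
Qed.

Lemma odd_tail_bound (k t : nat) : (k + 1 + (4 * k + 3) * t <= (k.+1 + t) ^ 2)%N.
Proof.
case: (leqP t k) => [/subnKC <-|/subnKC <-]; set x := (_ - _)%N; nia.
Qed.

Section WeightedSums.
Variable R : realDomainType.

Lemma nonincr_nat_in (m n : nat) (a : nat -> R) :
  (forall i, (m <= i)%N -> (i.+1 < n)%N -> a i.+1 <= a i) ->
  forall i j, (m <= i <= j)%N -> (j < n)%N -> a j <= a i.
Proof.
move=> anti i j /andP[mi ij] jn.
have homo : {in [pred k | m <= k < n]%N &, {homo a : k l / (k <= l)%N >-> l <= k}}.
  apply: homo_leq_in => [x|y x z|k l|k].
  - exact: lexx.
  - by move=> /[swap]; apply: le_trans.
  - by rewrite !inE => /andP[mk _] /andP[_ ln] h /andP[kh hl]; rewrite inE; lia.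
  - by rewrite !inE => /andP[mk _] /andP[_ k1n]; apply: anti.
by apply: homo; rewrite ?inE //; lia.
Qed.

Lemma ler_sum_nonincr (m n : nat) (u v a : nat -> R) :
  (forall k, (m <= k <= n)%N -> \sum_(m <= j < k) v j <= \sum_(m <= j < k) u j) ->
  (forall i, (m <= i)%N -> (i.+1 < n)%N -> a i.+1 <= a i) ->
  (forall i, (m <= i < n)%N -> 0 <= a i) ->
  \sum_(m <= j < n) v j * a j <= \sum_(m <= j < n) u j * a j.
Proof.
move=> prefix anti a_ge0; rewrite -subr_ge0 -sumrB.
under eq_bigr do rewrite -mulrBl.
pose D k := \sum_(m <= j < k) (u j - v j).
have D_ge0 k : (m <= k <= n)%N -> 0 <= D k.
  by move=> /prefix; rewrite /D sumrB subr_ge0.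
(* Abel summation: each step from k to k.+1 gives up D k.+1 * (a k - a k.+1) >= 0. *)
have abel t : (m + t < n)%N ->
    D (m + t).+1 * a (m + t)%N <= \sum_(m <= j < (m + t).+1) (u j - v j) * a j.
  elim: t => [|t IH] lt_n; first by rewrite addn0 /D !big_nat1.
  rewrite addnS /D !(big_nat_recr (m + t).+1) /= ?leqW ?leq_addr // mulrDl lerD2r.
  apply: le_trans (IH ltac:(lia)); apply: ler_wpM2l; first by apply: (D_ge0 (m + t).+1); lia.
  by apply: anti; lia.
have [n_le_m|m_lt_n] := leqP n m; first by rewrite big_geq.
have := abel (n - m).-1 ltac:(lia); rewrite (_ : (m + (n - m).-1).+1 = n); last by lia.
by apply: le_trans; apply: mulr_ge0; [apply: D_ge0 | apply: a_ge0]; lia.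
Qed.

Lemma double_le_cross_sum (x1 y1 x2 y2 : R) :
  0 <= x1 -> 0 <= y1 -> 0 <= x2 -> 0 <= y2 -> x2 * y2 <= x1 * y1 ->
  (x2 * y2) *+ 2 <= x1 * y2 + x2 * y1.
Proof.
move=> x1_ge0 y1_ge0 x2_ge0 y2_ge0 le21.
have AGM := leif_AGM2_scaled (x1 * y2) (x2 * y1).
rewrite -ler_sqr ?nnegrE ?mulrn_wge0 ?addr_ge0 ?mulr_ge0 //.
apply: le_trans AGM.1.
have -> : x1 * y2 * (x2 * y1) = x1 * y1 * (x2 * y2).
  by rewrite mulrACA [y2 * y1]mulrC mulrACA.
by rewrite exprMn_n expr2 ler_wMn2r // ler_wpM2r ?mulr_ge0.
Qed.

Lemma sum_odd_mul_le_mul_sum (n : nat) (f p : nat -> R) :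
  (forall i, (1 <= i <= n)%N -> 0 <= f i) ->
  (forall i, (1 <= i <= n)%N -> 0 <= p i) ->
  (forall i, (1 <= i < n)%N -> f i.+1 * p i.+1 <= f i * p i) ->
  \sum_(1 <= j < n.+1) (j.*2.-1)%:R * (f j * p j)
    <= (\sum_(1 <= i < n.+1) f i) * (\sum_(1 <= i < n.+1) p i).
Proof.
elim: n => [|n IH] f_ge0 p_ge0 anti; first by rewrite !big_geq // mulr0.
rewrite !(big_nat_recr n.+1) //=.
set F := \sum_(1 <= i < n.+1) f i; set P := \sum_(1 <= i < n.+1) p i.
have IHn : \sum_(1 <= j < n.+1) (j.*2.-1)%:R * (f j * p j) <= F * P.
  by apply: IH => i ?; [apply: f_ge0 | apply: p_ge0 | apply: anti]; lia.
have cross : (f n.+1 * p n.+1) *+ n.*2 <= F * p n.+1 + f n.+1 * P.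
  have -> : (f n.+1 * p n.+1) *+ n.*2 = \sum_(1 <= i < n.+1) (f n.+1 * p n.+1) *+ 2.
    by rewrite sumr_const_nat subn1 -mulrnA mul2n.
  rewrite mulr_suml mulr_sumr -big_split /=.
  apply: ler_sum_nat => i /andP[i_ge1 i_le_n].
  apply: double_le_cross_sum; try (apply: f_ge0 || apply: p_ge0); try lia.
  by apply: (@nonincr_nat_in 1 n.+2 (fun j => f j * p j)) => [j ? ?||]; [apply: anti|..]; lia.
have -> : ((n.+1).*2.-1)%:R = n.*2%:R + 1 :> R by rewrite doubleS /= -addn1 natrD.
rewrite -mulr_natr in cross; lra.
Qed.

Lemma sum_tail_weight_mul (q w c d : nat) (a : nat -> R) :
  (1 <= w <= q)%N ->
  \sum_(1 <= j < q.+1) (tail_weight w c d j)%:R * a j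
    = c%:R * a w + d%:R * \sum_(w.+1 <= j < q.+1) a j.
Proof.
move=> /andP[w_ge1 w_le_q].
have low : \sum_(1 <= j < w) (tail_weight w c d j)%:R * a j = 0.
  rewrite big_nat_cond big1 // => j /andP[/andP[_ lt_jw] _].
  by rewrite /tail_weight ltn_eqF // ltnNge ltnW // mul0r.
have high : \sum_(w.+1 <= j < q.+1) (tail_weight w c d j)%:R * a j
              = d%:R * \sum_(w.+1 <= j < q.+1) a j.
  by rewrite mulr_sumr; apply: eq_big_nat => j /andP[lt_wj _]; rewrite /tail_weight gtn_eqF // lt_wj.
by rewrite (big_cat_nat _ (n := w.+1)) // big_nat_recr //= low high add0r /tail_weight eqxx.
Qed.

Lemma tail_weighted_le_sum_odd (q w c d : nat) (a : nat -> R) :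
  (1 <= w <= q)%N ->
  (forall t, c + d * t <= (w + t) ^ 2)%N ->
  (forall i, (1 <= i < q)%N -> a i.+1 <= a i) ->
  (forall i, (1 <= i <= q)%N -> 0 <= a i) ->
  c%:R * a w + d%:R * \sum_(w.+1 <= j < q.+1) a j
    <= \sum_(1 <= j < q.+1) (j.*2.-1)%:R * a j.
Proof.
move=> w_range bound anti a_ge0; rewrite -sum_tail_weight_mul //.
apply: ler_sum_nonincr => [[|k] _|i i_ge1 i_lt|i i_range]; first by rewrite !big_geq.
- rewrite -!natr_sum ler_nat sum_odd_nat sum_tail_weight; last by case/andP: w_range.
  by case: ltnP => // w_le_k; have := bound (k - w)%N; rewrite subnKC.
- by apply: anti; rewrite i_ge1.
- exact: a_ge0.
Qed.

End WeightedSums.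

Theorem proposition5p5 (R : realFieldType) (q : nat) (p f : nat -> R) (z : nat) :
  (2 <= q)%N ->
  (forall i, (1 <= i <= q)%N -> 0 < p i) ->
  (forall i, (1 <= i <= q)%N -> 0 < f i) ->
  \sum_(1 <= i < q.+1) p i = 1 ->
  \sum_(1 <= i < q.+1) f i = 1 ->
  (forall i, (1 <= i < q)%N -> f i.+1 * p i.+1 <= f i * p i) ->
  (1 <= z < q)%N ->
  let w := (z %/ 2).+1 in
  (~~ odd z ->
     (3 * z + 2)%:R / 2 * (f w * p w)
     + (2 * z + 1)%:R * \sum_(w.+1 <= j < q.+1) f j * p j <= 1) /\
  (odd z ->
     (z + 1)%:R / 2 * (f w * p w)
     + (2 * z + 1)%:R * \sum_(w.+1 <= j < q.+1) f j * p j <= 1).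
Proof.
move=> _ p_gt0 f_gt0 sum_p sum_f anti z_range w.
have f_ge0 i : (1 <= i <= q)%N -> 0 <= f i by move/f_gt0/ltW.
have p_ge0 i : (1 <= i <= q)%N -> 0 <= p i by move/p_gt0/ltW.
have odd_weighted_le1 : \sum_(1 <= j < q.+1) (j.*2.-1)%:R * (f j * p j) <= 1.
  by have := sum_odd_mul_le_mul_sum f_ge0 p_ge0 anti; rewrite sum_f sum_p mulr1.
have tail_le1 c d : (forall t, c + d * t <= (z./2.+1 + t) ^ 2)%N ->
    c%:R * (f w * p w) + d%:R * \sum_(w.+1 <= j < q.+1) f j * p j <= 1.
  move=> bound; apply: le_trans odd_weighted_le1.
  apply: tail_weighted_le_sum_odd; rewrite /w ?divn2 //; first by lia.
  by move=> i i_range; rewrite mulr_ge0 ?f_ge0 ?p_ge0.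
have half_nat n : (n.*2)%:R / 2 = n%:R :> R by rewrite -muln2 natrM mulfK ?pnatr_eq0.
have z_eq := odd_double_half z; set k := z./2 in z_eq tail_le1.
split=> [even_z|odd_z]; rewrite -z_eq; [rewrite (negbTE even_z) | rewrite odd_z].
- rewrite (_ : 3 * _ + 2 = (3 * k + 1).*2)%N ?half_nat; last by lia.
  rewrite (_ : 2 * _ + 1 = 4 * k + 1)%N; last by lia.
  exact/tail_le1/even_tail_bound.
- rewrite (_ : _ + 1 = (k + 1).*2)%N ?half_nat; last by lia.
  rewrite (_ : 2 * _ + 1 = 4 * k + 3)%N; last by lia.
  exact/tail_le1/odd_tail_bound.
Qed.
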